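(* Let $f:G\to H$ be a surjective group homomorphism, and let $q_f:G\to G/\mathrm{Ker}(f)$ be the quotient map $g\mapsto g\,\mathrm{Ker}(f)$. (1) $\mathrm{sec}(f)\geq \sigma(f)$, and equality holds whenever $f$ does not admit a global section. (2) $\mathrm{sec}(f)=\mathrm{sec}(q_f)$. (3) If $f$ does not admit a global section, then $\mathrm{sec}(f)=\sigma(q_f)$.
   Context: For a homomorphism $f:G\to H$ and a subgroup $L\le H$, a local section of $f$ on $L$ is a homomorphism $s:L\to G$ with $f\circ s=\mathrm{incl}_L$ (the inclusion $L\hookrightarrow H$); a global section is a local section on $L=H$. The sectional number $\mathrm{sec}(f)$ is the least positive integer $m$ such that there exist proper subgroups $H_1,\ldots,H_m$ of $H$ with $H=H_1\cup\cdots\cup H_m$ and such that $f$ admits a local section on each $H_i$; $\mathrm{sec}(f)=\infty$ if no such $m$ exists. The covering number $\sigma(f)$ of a homomorphism $f:G\to H$ is the least positive integer $m$ such that there exist proper subgroups $G_1,\ldots,G_m$ of $G$ with $G=G_1\cup\cdots\cup G_m$ and, for each $i$, $\mathrm{Ker}(f)\subsetneq G_i$ and there is an isomorphism $\Omega_i:\mathrm{Ker}(f)\rtimes f(G_i)\to G_i$ (from some external semidirect product of $\mathrm{Ker}(f)$ by $f(G_i)$, with underlying set $\mathrm{Ker}(f)\times f(G_i)$) such that $f\circ\Omega_i=\pi_2$, the projection to the second coordinate; $\sigma(f)=\infty$ if no such $m$ exists. *)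

From Stdlib Require Import Arith ClassicalEpsilon FunctionalExtensionality
  PropExtensionality ProofIrrelevance.

Set Implicit Arguments.

Record grp := Grp {
  car :> Type;
  mul : car -> car -> car;
  one : car;
  inv : car -> car;
  mulA : forall x y z, mul x (mul y z) = mul (mul x y) z;
  mul1g : forall x, mul one x = x;
  mulg1 : forall x, mul x one = x;
  mulVg : forall x, mul (inv x) x = one;
  mulgV : forall x, mul x (inv x) = one }.

Arguments mul {g}.
Arguments one {g}.
Arguments inv {g}.
Arguments mulA {g}.
Arguments mul1g {g}.
Arguments mulg1 {g}.
Arguments mulVg {g}.
Arguments mulgV {g}.

Section GroupLemmas.
Context {G : grp}.
Implicit Types x y z : G.

Lemma mulKg x y : mul (inv x) (mul x y) = y.
Proof. now rewrite mulA, mulVg, mul1g. Qed.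

Lemma mulKVg x y : mul x (mul (inv x) y) = y.
Proof. now rewrite mulA, mulgV, mul1g. Qed.

Lemma inv_uniq x y : mul x y = one -> inv x = y.
Proof.
  intro H. rewrite <- (mulg1 (inv x)), <- H. now rewrite mulKg.
Qed.

Lemma invM x y : inv (mul x y) = mul (inv y) (inv x).
Proof.
  apply inv_uniq. rewrite <- mulA, (mulA y), mulgV, mul1g. apply mulgV.
Qed.

Lemma invK x : inv (inv x) = x.
Proof. apply inv_uniq, mulVg. Qed.
End GroupLemmas.

Definition is_hom {G H : grp} (f : G -> H) : Prop :=
  forall x y, f (mul x y) = mul (f x) (f y).

Definition is_subgroup {G : grp} (S : G -> Prop) : Prop :=
  S one /\ (forall x y, S x -> S y -> S (mul x y)) /\ (forall x, S x -> S (inv x)).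

Definition is_normal {G : grp} (N : G -> Prop) : Prop :=
  is_subgroup N /\ forall g n, N n -> N (mul (mul (inv g) n) g).

Definition proper {G : grp} (S : G -> Prop) : Prop := exists x, ~ S x.

Definition strict_incl {G : grp} (A B : G -> Prop) : Prop :=
  (forall x, A x -> B x) /\ exists x, B x /\ ~ A x.

Definition ker {G H : grp} (f : G -> H) : G -> Prop := fun x => f x = one.

Definition img {G H : grp} (f : G -> H) (S : G -> Prop) : H -> Prop :=
  fun h => exists g, S g /\ f g = h.

Lemma hom_one {G H : grp} (f : G -> H) : is_hom f -> f one = one.
Proof.
  intro hf. pose proof (hf one one) as E. rewrite mul1g in E.
  transitivity (mul (inv (f one)) (mul (f one) (f one))).
  - now rewrite mulKg.
  - rewrite <- E. apply mulVg.
Qed.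

Lemma hom_inv {G H : grp} (f : G -> H) : is_hom f -> forall x, f (inv x) = inv (f x).
Proof.
  intros hf x. symmetry. apply inv_uniq. now rewrite <- hf, mulgV, hom_one.
Qed.

Lemma ker_normal {G H : grp} (f : G -> H) : is_hom f -> is_normal (ker f).
Proof.
  intro hf. unfold is_normal, is_subgroup, ker.
  repeat split.
  - now apply hom_one.
  - intros x y Hx Hy. now rewrite hf, Hx, Hy, mul1g.
  - intros x Hx. now rewrite hom_inv, Hx, <- (mulg1 (inv one)), mulVg.
  - intros g n Hn. now rewrite !hf, Hn, mulg1, hom_inv, mulVg.
Qed.

Section Quotient.
Context {G : grp} {N : G -> Prop} (HN : is_normal N).

Definition lcoset (g : G) : G -> Prop := fun x => N (mul (inv g) x).

Definition quot_car : Type := { S : G -> Prop | exists g, S = lcoset g }.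

Definition qmk (g : G) : quot_car := exist _ (lcoset g) (ex_intro _ g eq_refl).

Definition qrep (S : quot_car) : G :=
  proj1_sig (constructive_indefinite_description _ (proj2_sig S)).

Lemma qrep_spec S : proj1_sig S = lcoset (qrep S).
Proof. exact (proj2_sig (constructive_indefinite_description _ (proj2_sig S))). Qed.

Lemma quot_sig_eq (S T : quot_car) : proj1_sig S = proj1_sig T -> S = T.
Proof.
  destruct S as [P HP], T as [Q HQ]; simpl; intros ->. f_equal. apply proof_irrelevance.
Qed.

Lemma qmk_rep S : qmk (qrep S) = S.
Proof. apply quot_sig_eq; simpl. symmetry. apply qrep_spec. Qed.

Lemma quot_surj S : exists g, S = qmk g.
Proof. exists (qrep S). symmetry. apply qmk_rep. Qed.

Lemma qmk_eq (a b : G) : N (mul (inv a) b) -> qmk a = qmk b.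
Proof.
  destruct HN as [[N1 [NM NV]] _].
  intro Hab. apply quot_sig_eq; simpl. unfold lcoset.
  apply functional_extensionality; intro x. apply propositional_extensionality.
  split; intro Hx.
  - replace (mul (inv b) x) with (mul (inv (mul (inv a) b)) (mul (inv a) x)).
    + apply NM; auto.
    + now rewrite invM, invK, <- mulA, mulKVg.
  - replace (mul (inv a) x) with (mul (mul (inv a) b) (mul (inv b) x)).
    + apply NM; auto.
    + now rewrite <- mulA, mulKVg.
Qed.

Lemma qrep_mk (a : G) : N (mul (inv a) (qrep (qmk a))).
Proof.
  destruct HN as [[N1 [NM NV]] _].
  pose proof (qrep_spec (qmk a)) as E. simpl in E.
  pose proof (f_equal (fun P => P (qrep (qmk a))) E) as E'. simpl in E'.
  unfold lcoset in E'. rewrite E', mulVg. exact N1.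
Qed.

Definition qmul (S T : quot_car) : quot_car := qmk (mul (qrep S) (qrep T)).
Definition qone : quot_car := qmk one.
Definition qinv (S : quot_car) : quot_car := qmk (inv (qrep S)).

Lemma qmul_mk a b : qmul (qmk a) (qmk b) = qmk (mul a b).
Proof.
  destruct HN as [[N1 [NM NV]] Nn].
  unfold qmul. symmetry. apply qmk_eq.
  pose proof (qrep_mk a) as Ha. pose proof (qrep_mk b) as Hb.
  set (r1 := qrep (qmk a)) in *. set (r2 := qrep (qmk b)) in *.
  replace (mul (inv (mul a b)) (mul r1 r2))
    with (mul (mul (mul (inv b) (mul (inv a) r1)) b) (mul (inv b) r2)).
  - apply NM; auto.
  - rewrite invM, <- !mulA. f_equal. f_equal. now rewrite mulKVg.
Qed.

Lemma qinv_mk a : qinv (qmk a) = qmk (inv a).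
Proof.
  destruct HN as [[N1 [NM NV]] Nn].
  unfold qinv. apply qmk_eq.
  pose proof (qrep_mk a) as Ha. set (r := qrep (qmk a)) in *.
  replace (mul (inv (inv r)) (inv a))
    with (mul (mul (inv (inv a)) (mul (inv a) r)) (inv a)).
  - apply Nn; auto.
  - now rewrite !invK, mulKVg.
Qed.

Lemma qmulA S T U : qmul S (qmul T U) = qmul (qmul S T) U.
Proof.
  destruct (quot_surj S) as [a ->], (quot_surj T) as [b ->], (quot_surj U) as [c ->].
  now rewrite !qmul_mk, mulA.
Qed.

Lemma qmul1g S : qmul qone S = S.
Proof. destruct (quot_surj S) as [a ->]. unfold qone. now rewrite qmul_mk, mul1g. Qed.

Lemma qmulg1 S : qmul S qone = S.
Proof. destruct (quot_surj S) as [a ->]. unfold qone. now rewrite qmul_mk, mulg1. Qed.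

Lemma qmulVg S : qmul (qinv S) S = qone.
Proof. destruct (quot_surj S) as [a ->]. now rewrite qinv_mk, qmul_mk, mulVg. Qed.

Lemma qmulgV S : qmul S (qinv S) = qone.
Proof. destruct (quot_surj S) as [a ->]. now rewrite qinv_mk, qmul_mk, mulgV. Qed.

Definition quot_grp : grp := @Grp quot_car qmul qone qinv qmulA qmul1g qmulg1 qmulVg qmulgV.

Definition quot_map : G -> quot_grp := qmk.

End Quotient.

Definition qf {G H : grp} (f : G -> H) (hf : is_hom f) : G -> quot_grp (ker_normal hf) :=
  quot_map (ker_normal hf).

(** local section of f on the subgroup L of H: a homomorphism s : L -> G
    with f (s x) = x for x in L (s is given as a function on H, only its
    values on L matter) *)
Definition local_section {G H : grp} (f : G -> H) (L : H -> Prop) (s : H -> G) : Prop :=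
  (forall x y, L x -> L y -> s (mul x y) = mul (s x) (s y)) /\
  (forall x, L x -> f (s x) = x).

Definition has_global_section {G H : grp} (f : G -> H) : Prop :=
  exists s, local_section f (fun _ => True) s.

(** * Numbers in N u {oo} as option nat (None = oo) *)
Definition is_least_num (P : nat -> Prop) (v : option nat) : Prop :=
  match v with
  | Some m => P m /\ forall k, P k -> m <= k
  | None => forall k, ~ P k
  end.

Definition least_num (P : nat -> Prop) : option nat :=
  epsilon (inhabits None) (is_least_num P).

Definition le_onat (a b : option nat) : Prop :=
  match a, b with
  | _, None => True
  | None, Some _ => False
  | Some x, Some y => x <= y
  end.

Definition sec_admissible {G H : grp} (f : G -> H) (m : nat) : Prop :=
  1 <= m /\ exists Hs : nat -> (H -> Prop),
    (forall i, i < m ->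
       is_subgroup (Hs i) /\ proper (Hs i) /\ exists s, local_section f (Hs i) s) /\
    (forall y, exists i, i < m /\ Hs i y).

Definition sec {G H : grp} (f : G -> H) : option nat := least_num (sec_admissible f).

(** G_i is isomorphic, via some Omega with f o Omega = pi_2, to an external
    semidirect product Ker(f) x| f(G_i) for some action of f(G_i) on Ker(f)
    by automorphisms, with product (k1,h1)(k2,h2) = (k1 act(h1)(k2), h1 h2). *)
Definition semidirect_split {G H : grp} (f : G -> H) (Gi : G -> Prop) : Prop :=
  let K := ker f in
  let Q := img f Gi in
  exists (act : H -> G -> G) (Om : G -> H -> G),
    (* act : Q -> Aut(K) is a group homomorphism *)
    (forall h k, Q h -> K k -> K (act h k)) /\
    (forall h k1 k2, Q h -> K k1 -> K k2 -> act h (mul k1 k2) = mul (act h k1) (act h k2)) /\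
    (forall h k1 k2, Q h -> K k1 -> K k2 -> act h k1 = act h k2 -> k1 = k2) /\
    (forall h k, Q h -> K k -> exists k', K k' /\ act h k' = k) /\
    (forall h1 h2 k, Q h1 -> Q h2 -> K k -> act (mul h1 h2) k = act h1 (act h2 k)) /\
    (* Om : K x| Q -> G_i is a group isomorphism *)
    (forall k h, K k -> Q h -> Gi (Om k h)) /\
    (forall g, Gi g -> exists k h, K k /\ Q h /\ Om k h = g) /\
    (forall k1 h1 k2 h2, K k1 -> Q h1 -> K k2 -> Q h2 ->
       Om k1 h1 = Om k2 h2 -> k1 = k2 /\ h1 = h2) /\
    (forall k1 h1 k2 h2, K k1 -> Q h1 -> K k2 -> Q h2 ->
       Om (mul k1 (act h1 k2)) (mul h1 h2) = mul (Om k1 h1) (Om k2 h2)) /\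
    (forall k h, K k -> Q h -> f (Om k h) = h).

Definition sigma_admissible {G H : grp} (f : G -> H) (m : nat) : Prop :=
  1 <= m /\ exists Gs : nat -> (G -> Prop),
    (forall i, i < m ->
       is_subgroup (Gs i) /\ proper (Gs i) /\ strict_incl (ker f) (Gs i) /\
       semidirect_split f (Gs i)) /\
    (forall x, exists i, i < m /\ Gs i x).

Definition sigma {G H : grp} (f : G -> H) : option nat := least_num (sigma_admissible f).

From Stdlib Require Import Classical ClassicalEpsilon FunctionalExtensionality
  PropExtensionality.

(* A local section s of f on L < H makes the preimage f^-1(L) an internal
   semidirect product Ker(f) x| L, via (k, h) |-> k s(h), with L acting on
   Ker(f) by conjugation with s(h); conversely, the slice {1} x| f(G_i) of such
   a splitting is a local section on f(G_i).  Taking preimages and images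
   therefore turns a cover of H by proper subgroups carrying local sections into
   a cover of G as in the definition of sigma(f), and back, so sec(f) = sigma(f)
   for every surjective f, with or without a global section.  Finally q_f
   differs from f by the isomorphism G/Ker(f) ~ H, which transports local
   sections, so sec(q_f) = sec(f). *)

Section GroupFacts.
Context {G : grp}.
Implicit Types x y z : G.

Lemma mulgK x y : mul (mul x y) (inv y) = x.
Proof. now rewrite <- mulA, mulgV, mulg1. Qed.

Lemma mulgKV x y : mul (mul x (inv y)) y = x.
Proof. now rewrite <- mulA, mulVg, mulg1. Qed.

Lemma mulgI x y z : mul x y = mul x z -> y = z.
Proof. intro E. rewrite <- (mulKg x y), E. apply mulKg. Qed.

Lemma mulIg x y z : mul y x = mul z x -> y = z.
Proof. intro E. rewrite <- (mulgK y x), E. apply mulgK. Qed.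

Lemma mulg_idem_one x : mul x x = x -> x = one.
Proof. intro E. apply (mulgI x). now rewrite mulg1. Qed.
End GroupFacts.

Lemma hom_eq_ker {G H : grp} (f : G -> H) (hf : is_hom f) (a b : G) :
  f a = f b <-> ker f (mul (inv a) b).
Proof.
  unfold ker. rewrite hf, (hom_inv hf). split.
  - intros ->. apply mulVg.
  - intro E. symmetry. rewrite <- (mulKVg (f a) (f b)), E. apply mulg1.
Qed.

Definition preim {G H : grp} (f : G -> H) (L : H -> Prop) : G -> Prop :=
  fun g => L (f g).

Definition is_iso {G H : grp} (f : G -> H) : Prop :=
  is_hom f /\ (forall h, exists g, f g = h) /\ (forall g g', f g = f g' -> g = g').

Section PreimagesAndImages.
Context {G H : grp} (f : G -> H) (hf : is_hom f).

Lemma preim_subgroup (L : H -> Prop) : is_subgroup L -> is_subgroup (preim f L).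
Proof.
  intros [L1 [LM LV]]. unfold preim. split; [|split].
  - now rewrite hom_one.
  - intros x y Hx Hy. rewrite hf. auto.
  - intros x Hx. rewrite hom_inv; auto.
Qed.

Lemma img_subgroup (S : G -> Prop) : is_subgroup S -> is_subgroup (img f S).
Proof.
  intros [S1 [SM SV]]. split; [|split].
  - exists one. split; auto. apply hom_one; auto.
  - intros x y [a [Ha <-]] [b [Hb <-]]. exists (mul a b). split; auto.
  - intros x [a [Ha <-]]. exists (inv a). split; auto. apply hom_inv; auto.
Qed.

Lemma img_proper (S : G -> Prop) : is_subgroup S -> (forall x, ker f x -> S x) ->
  proper S -> proper (img f S).
Proof.
  intros [_ [SM _]] kerS [x nx]. exists (f x). intros [g [Sg E]]. apply nx.
  rewrite <- (mulKVg g x). apply SM; auto. apply kerS, hom_eq_ker; auto.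
Qed.

Lemma img_preim (L : H -> Prop) h : img f (preim f L) h -> L h.
Proof. now intros [g [Lg <-]]. Qed.

Lemma section_semidirect_split (L : H -> Prop) (s : H -> G) :
  local_section f L s -> semidirect_split f (preim f L).
Proof.
  intros [sM sf].
  destruct (ker_normal hf) as [_ ker_conjV].
  assert (ker_conj : forall g k, ker f k -> ker f (mul (mul g k) (inv g))).
  { intros g k Kk. rewrite <- (invK g) at 1. apply ker_conjV, Kk. }
  assert (f_Om : forall h k, L h -> ker f k -> f (mul k (s h)) = h).
  { intros h k Lh Kk. rewrite hf, Kk, mul1g; auto. }
  unfold semidirect_split; cbv zeta.
  exists (fun h k => mul (mul (s h) k) (inv (s h))), (fun k h => mul k (s h)).
  repeat match goal with |- _ /\ _ => split end.
  - intros h k _ Kk. auto.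
  - intros h k1 k2 _ _ _. now rewrite !mulA, mulgKV.
  - intros h k1 k2 _ _ _ E. exact (mulgI _ _ _ (mulIg _ _ _ E)).
  - intros h k _ Kk. exists (mul (mul (inv (s h)) k) (s h)). split; auto.
    now rewrite !mulA, mulgV, mul1g, mulgK.
  - intros h1 h2 k Q1 Q2 _. apply img_preim in Q1. apply img_preim in Q2.
    now rewrite (sM h1 h2 Q1 Q2), invM, !mulA.
  - intros k h Kk Qh. apply img_preim in Qh. unfold preim. now rewrite f_Om.
  - intros g Sg. exists (mul g (inv (s (f g)))), (f g). split; [|split].
    + unfold ker. rewrite hf, (hom_inv hf), sf, mulgV; auto.
    + now exists g.
    + apply mulgKV.
  - intros k1 h1 k2 h2 K1 Q1 K2 Q2 E. apply img_preim in Q1. apply img_preim in Q2.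
    assert (h1 = h2) as <- by (apply (f_equal f) in E; now rewrite !f_Om in E).
    split; [exact (mulIg _ _ _ E) | reflexivity].
  - intros k1 h1 k2 h2 _ Q1 _ Q2. apply img_preim in Q1. apply img_preim in Q2.
    now rewrite (sM h1 h2 Q1 Q2), !mulA, mulgKV.
  - intros k h Kk Qh. apply img_preim in Qh. auto.
Qed.

Lemma semidirect_split_section (S : G -> Prop) :
  semidirect_split f S -> exists s, local_section f (img f S) s.
Proof.
  unfold semidirect_split; cbv zeta.
  intros [act [Om [_ [act_mul [_ [_ [_ [_ [_ [_ [Om_mul Om_f]]]]]]]]]]].
  assert (K1 : ker f one) by (apply hom_one; auto).
  exists (fun h => Om one h). split.
  - intros x y Qx Qy.
    assert (act1 : act x one = one).
    { apply mulg_idem_one. rewrite <- act_mul, mul1g; auto. }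
    now rewrite <- (Om_mul one x one y K1 Qx K1 Qy), act1, mul1g.
  - intros x Qx. apply Om_f; auto.
Qed.
End PreimagesAndImages.

Section SurjectiveHom.
Context {G H : grp} (f : G -> H) (f_surj : forall h, exists g, f g = h).

Lemma preim_proper (L : H -> Prop) : proper L -> proper (preim f L).
Proof. intros [x nx]. destruct (f_surj x) as [g <-]. now exists g. Qed.

Lemma ker_strict_preim (L : H -> Prop) : is_subgroup L -> (exists y, L y /\ y <> one) ->
  strict_incl (ker f) (preim f L).
Proof.
  intros [L1 _] [y [Ly ny]]. split.
  - intros x Kx. unfold preim. now rewrite Kx.
  - destruct (f_surj y) as [g <-]. now exists g.
Qed.
End SurjectiveHom.

Lemma sec_admissible_nontrivial {G H : grp} {f : G -> H} {m} : sec_admissible f m ->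
  exists Hs : nat -> (H -> Prop),
    (forall i, i < m ->
       is_subgroup (Hs i) /\ proper (Hs i) /\ (exists y, Hs i y /\ y <> one) /\
       exists s, local_section f (Hs i) s) /\
    (forall y, exists i, i < m /\ Hs i y).
Proof.
  intros [m1 [Hs [HP Hc]]].
  assert (nt : exists j, j < m /\ exists y, Hs j y /\ y <> one).
  { destruct (HP 0 m1) as [[S1 _] [[x nx] _]]. destruct (Hc x) as [j [jm Hj]].
    exists j. split; auto. exists x. split; auto. intros ->. apply nx, S1. }
  destruct nt as [j [jm jnt]].
  (* a trivial member covers only [one], which H_j also contains *)
  set (r := fun i => if excluded_middle_informative (exists y, Hs i y /\ y <> one)
                     then i else j).
  exists (fun i => Hs (r i)). split.
  - intros i im.
    assert (rm : r i < m /\ exists y, Hs (r i) y /\ y <> one)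
      by (unfold r; destruct excluded_middle_informative; auto).
    destruct rm as [rm rnt]. destruct (HP _ rm) as [Sub [Pr Sec]]. auto.
  - intros y. destruct (Hc y) as [i [im Hi]]. exists i. split; auto.
    unfold r. destruct excluded_middle_informative as [_|n]; auto.
    destruct (classic (y = one)) as [->|ny].
    + destruct (HP j jm) as [[S1 _] _]. exact S1.
    + exfalso. apply n. now exists y.
Qed.

Section SecSigma.
Context {G H : grp} (f : G -> H) (hf : is_hom f) (f_surj : forall h, exists g, f g = h).

Lemma sec_admissible_sigma m : sec_admissible f m -> sigma_admissible f m.
Proof.
  intro adm. split; [exact (proj1 adm)|].
  destruct (sec_admissible_nontrivial adm) as [Hs [HP Hc]].
  exists (fun i => preim f (Hs i)). split.
  - intros i im. destruct (HP i im) as [Sub [Pr [nt [s Ls]]]].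
    split; [|split; [|split]].
    + apply preim_subgroup; auto.
    + apply preim_proper; auto.
    + apply ker_strict_preim; auto.
    + eapply section_semidirect_split; eauto.
  - intros x. apply (Hc (f x)).
Qed.

Lemma sigma_admissible_sec m : sigma_admissible f m -> sec_admissible f m.
Proof.
  intros [m1 [Gs [GP Gc]]]. split; auto.
  exists (fun i => img f (Gs i)). split.
  - intros i im. destruct (GP i im) as [Sub [Pr [[kerS _] Sp]]].
    split; [|split].
    + apply img_subgroup; auto.
    + apply img_proper; auto.
    + apply semidirect_split_section; auto.
  - intros y. destruct (f_surj y) as [x <-]. destruct (Gc x) as [i [im Hi]].
    exists i. split; auto. now exists x.
Qed.
End SecSigma.

Lemma least_num_ext (P Q : nat -> Prop) : (forall m, P m <-> Q m) -> least_num P = least_num Q.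
Proof.
  intro E. replace Q with P; auto.
  apply functional_extensionality. intro m. apply propositional_extensionality, E.
Qed.

Lemma le_onat_refl (a : option nat) : le_onat a a.
Proof. destruct a; simpl; auto. Qed.

Lemma sec_eq_sigma {G H : grp} (f : G -> H) : is_hom f -> (forall h, exists g, f g = h) ->
  sec f = sigma f.
Proof.
  intros hf fs. apply least_num_ext. intro m.
  split; [apply sec_admissible_sigma | apply sigma_admissible_sec]; auto.
Qed.

Section IsoTransfer.
Context {G H1 H2 : grp} (f1 : G -> H1) (f2 : G -> H2) (phi : H2 -> H1).
Hypotheses (phi_iso : is_iso phi) (phi_f2 : forall g, phi (f2 g) = f1 g).

Lemma sec_admissible_iso m : sec_admissible f1 m -> sec_admissible f2 m.
Proof.
  destruct phi_iso as [hp [ps pi]].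
  intros [m1 [Hs [HP Hc]]]. split; auto.
  exists (fun i => preim phi (Hs i)). split.
  - intros i im. destruct (HP i im) as [Sub [Pr [s [sM sf]]]].
    split; [|split].
    + apply preim_subgroup; auto.
    + apply preim_proper; auto.
    + exists (fun y => s (phi y)). split.
      * intros x y Hx Hy. unfold preim in *. rewrite hp. auto.
      * intros y Hy. apply pi. rewrite phi_f2. auto.
  - intros y. apply Hc.
Qed.

Lemma iso_inverse : exists psi : H1 -> H2,
  is_iso psi /\ (forall x, phi (psi x) = x) /\ (forall y, psi (phi y) = y).
Proof.
  destruct phi_iso as [hp [ps pi]].
  exists (fun x => proj1_sig (constructive_indefinite_description _ (ps x))).
  set (psi := fun x => _).
  assert (phi_psi : forall x, phi (psi x) = x)
    by (intro x; exact (proj2_sig (constructive_indefinite_description _ (ps x)))).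
  assert (psi_phi : forall y, psi (phi y) = y) by (intro y; apply pi, phi_psi).
  split; [split; [|split]|split]; auto.
  - intros x y. apply pi. now rewrite hp, !phi_psi.
  - intro y. now exists (phi y).
  - intros x y E. now rewrite <- (phi_psi x), <- (phi_psi y), E.
Qed.
End IsoTransfer.

Lemma sec_iso {G H1 H2 : grp} (f1 : G -> H1) (f2 : G -> H2) (phi : H2 -> H1) :
  is_iso phi -> (forall g, phi (f2 g) = f1 g) -> sec f1 = sec f2.
Proof.
  intros phi_iso phi_f2.
  destruct (iso_inverse phi phi_iso) as [psi [psi_iso [_ psi_phi]]].
  apply least_num_ext. intro m. split; [apply (sec_admissible_iso f1 f2 phi); auto|].
  apply (sec_admissible_iso f2 f1 psi); auto.
  intro g. now rewrite <- phi_f2, psi_phi.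
Qed.

Section KernelQuotient.
Context {G H : grp} (f : G -> H) (hf : is_hom f).

Lemma qf_hom : is_hom (qf hf).
Proof. intros x y. exact (eq_sym (qmul_mk (ker_normal hf) x y)). Qed.

Lemma qf_surj S : exists g, qf hf g = S.
Proof. destruct (quot_surj S) as [g ->]. now exists g. Qed.

Definition qf_induced (S : quot_grp (ker_normal hf)) : H := f (qrep S).

Lemma qf_inducedE g : qf_induced (qf hf g) = f g.
Proof.
  unfold qf_induced. symmetry.
  apply hom_eq_ker; [exact hf | exact (qrep_mk (ker_normal hf) g)].
Qed.

Lemma qf_induced_iso : (forall h, exists g, f g = h) -> is_iso qf_induced.
Proof.
  intro fs. split; [|split].
  - intros S T. destruct (qf_surj S) as [a <-], (qf_surj T) as [b <-].
    now rewrite <- qf_hom, !qf_inducedE, hf.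
  - intro h. destruct (fs h) as [g <-]. exists (qf hf g). apply qf_inducedE.
  - intros S T. destruct (qf_surj S) as [a <-], (qf_surj T) as [b <-].
    rewrite !qf_inducedE. intro E. apply (qmk_eq (ker_normal hf)), hom_eq_ker; auto.
Qed.

Lemma sec_qf : (forall h, exists g, f g = h) -> sec f = sec (qf hf).
Proof.
  intro fs. apply sec_iso with qf_induced; [apply qf_induced_iso, fs | apply qf_inducedE].
Qed.
End KernelQuotient.

Theorem theorem2p11 (G H : grp) (f : G -> H) (hf : is_hom f)
  (fsurj : forall h : H, exists g : G, f g = h) :
  (* (1) *)
  (le_onat (sigma f) (sec f) /\ (~ has_global_section f -> sec f = sigma f)) /\
  (* (2) *)
  sec f = sec (qf hf) /\
  (* (3) *)
  (~ has_global_section f -> sec f = sigma (qf hf)).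
Proof.
  pose proof (sec_eq_sigma f hf fsurj) as sec_sigma_f.
  pose proof (sec_qf f hf fsurj) as sec_f_qf.
  pose proof (sec_eq_sigma (qf hf) (qf_hom f hf) (qf_surj f hf)) as sec_sigma_qf.
  split; [split|split].
  - rewrite sec_sigma_f. apply le_onat_refl.
  - intros _. exact sec_sigma_f.
  - exact sec_f_qf.
  - intros _. rewrite sec_f_qf. exact sec_sigma_qf.
Qed.
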